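(* Let $D$ be a delta-matroid on $[n,\overline{n}]$. The collection of independent sets $I$ of $D$ with $a(I)=0$ is a simplicial complex on $[n,\overline{n}]$, i.e., it is closed under taking subsets.
   Context: For a finite $E\subseteq\{1,2,\dots\}$ let $E\cup\overline{E}$ consist of $E$ and formal copies $\overline{i}$ ($i\in E$), with involution $a\mapsto\overline{a}$; $\overline{S}=\{\overline{a}:a\in S\}$; $[n,\overline{n}]$ is the case $E=[n]$. A subset is admissible if it contains at most one of $i,\overline{i}$ for each $i$. In $\mathbb{R}^E$ set $e_{\overline{i}}=-e_i$, $e_S=\sum_{a\in S}e_a$. A delta-matroid on $E\cup\overline{E}$ is a nonempty collection $\mathcal{F}$ of admissible sets of size $|E|$ (feasible sets) such that $\operatorname{Conv}\{e_B:B\in\mathcal{F}\}$ has all edges parallel to some $e_i$ or $e_i\pm e_j$. An admissible $S$ is independent in $D$ if it is contained in a feasible set. For $A\subseteq[n]$, the projection $D(A)$ is the delta-matroid on $([n]\setminus A)\cup\overline{([n]\setminus A)}$ with feasible sets $B\setminus(A\cup\overline{A})$, $B\in\mathcal{F}$. For admissible $S$, $\underline{S}\subseteq[n]$ is its unsigned version (image under identifying $i$ with $\overline{i}$). Order $[n]$ by $1<2<\dots<n$. For a delta-matroid $D'$ on $E\cup\overline{E}$ and a feasible set $B$ of $D'$: $i\in E$ is $B$-orientable if $B\,\Delta\,\{i,\overline{i}\}$ is not feasible in $D'$; $i$ is $B$-active if it is $B$-orientable and there is no $j\in E$ with $j<i$ such that $B\,\Delta\,\{i,j,\overline{i},\overline{j}\}$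 is feasible in $D'$. For $I$ independent in $D$, $I$ is a feasible set of $D([n]\setminus\underline{I})$, and $i\in\underline{I}$ is $I$-active if it is $I$-active in $D([n]\setminus\underline{I})$; $a(I)$ is the number of $I$-active elements of $\underline{I}$. *)

From Stdlib Require Import Reals.
From mathcomp Require Import all_boot all_order all_algebra.
From mathcomp Require Import Rstruct.
Set Implicit Arguments. Unset Strict Implicit. Unset Printing Implicit Defensive.
Import Order.TTheory GRing.Theory Num.Theory.
Local Open Scope ring_scope.

(* Ground set [n, nbar]: (i, false) encodes the element i+1 of [n],
   (i, true) encodes its formal copy  bar(i+1).  The order 1<2<..<n on [n]
   is the order of 'I_n. *)
Definition elt (n : nat) := ('I_n * bool)%type.

Definition unsigned (n : nat) (S : {set elt n}) : {set 'I_n} := [set x.1 | x in S].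

Definition admissible (n : nat) (S : {set elt n}) : bool :=
  [forall i : 'I_n, ~~ (((i, false) \in S) && ((i, true) \in S))].

Definition evec (n : nat) (S : {set elt n}) (k : 'I_n) : R :=
  ((k, false) \in S)%:R - ((k, true) \in S)%:R.

Definition dotR (n : nat) (w v : 'I_n -> R) : R := \sum_(k < n) w k * v k.

Definition ebasis (n : nat) (i : 'I_n) (k : 'I_n) : R := (k == i)%:R.

Definition parallel_to_root (n : nat) (d : 'I_n -> R) : Prop :=
  exists c : R, c != 0 /\
  exists i j : 'I_n,
    (forall k, d k = c * ebasis i k) \/
    (forall k, d k = c * (ebasis i k + ebasis j k)) \/
    (forall k, d k = c * (ebasis i k - ebasis j k)).

(* [e_B1, e_B2] is an edge of Conv{e_B : B in F}: it is the face cut out by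
   some linear functional w, i.e. the maximizers of w over the points e_B
   (B in F) are exactly e_B1 and e_B2 (B1 <> B2). *)
Definition is_edge (n : nat) (F : {set {set elt n}}) (B1 B2 : {set elt n}) : Prop :=
  B1 \in F /\ B2 \in F /\ B1 != B2 /\
  exists w : 'I_n -> R,
    dotR w (evec B2) = dotR w (evec B1) /\
    forall B, B \in F ->
      dotR w (evec B) <= dotR w (evec B1) /\
      (dotR w (evec B) = dotR w (evec B1) -> B = B1 \/ B = B2).

Definition delta_matroid (n : nat) (F : {set {set elt n}}) : Prop :=
  F != set0 /\
  (forall B, B \in F -> admissible B /\ #|B| = n) /\
  (forall B1 B2, is_edge F B1 B2 -> parallel_to_root (fun k => evec B1 k - evec B2 k)).

Definition independent (n : nat) (F : {set {set elt n}}) (S : {set elt n}) : Prop :=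
  admissible S /\ exists2 B, B \in F & S \subset B.

Definition symdiff (T : finType) (A B : {set T}) : {set T} := (A :\: B) :|: (B :\: A).

(* S is feasible in the projection D([n] \ E), E a subset of [n]:
   feasible sets are B \ (A u bar A) with A = [n] \ E, B in F. *)
Definition proj_feasible (n : nat) (F : {set {set elt n}}) (E : {set 'I_n})
    (S : {set elt n}) : bool :=
  [exists B in F, S == B :&: [set x : elt n | x.1 \in E]].

Definition orientable (n : nat) (F : {set {set elt n}}) (E : {set 'I_n})
    (B : {set elt n}) (i : 'I_n) : bool :=
  ~~ proj_feasible F E (symdiff B [set (i, false); (i, true)]).

Definition active (n : nat) (F : {set {set elt n}}) (E : {set 'I_n})
    (B : {set elt n}) (i : 'I_n) : bool :=
  orientable F E B i &&
  ~~ [exists j : 'I_n, (j \in E) && (j < i)%N &&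
        proj_feasible F E (symdiff B [set (i, false); (j, false); (i, true); (j, true)])].

(* a(I): number of I-active elements of the unsigned version of I,
   activity being computed in D([n] \ unsigned I) *)
Definition num_active (n : nat) (F : {set {set elt n}}) (I : {set elt n}) : nat :=
  #|[set i in unsigned I | active F (unsigned I) I i]|.

From Stdlib Require Import Reals.
From mathcomp Require Import all_boot all_order all_algebra.
From mathcomp Require Import Rstruct.

Set Implicit Arguments. Unset Strict Implicit. Unset Printing Implicit Defensive.

(* For J inside I, the projection D([n] \ unsigned J) is a further
   projection of D([n] \ unsigned I), and J is the image of I under it.  Any
   exchange witnessing that an element of J is not I-active therefore
   projects to one witnessing that it is not J-active: an exchange with some
   j < i outside unsigned J projects to the plain flip of i. *)

Lemma symdiffIr (T : finType) (A B C : {set T}) :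
  symdiff A B :&: C = symdiff (A :&: C) (B :&: C).
Proof.
apply/setP=> x; rewrite /symdiff !inE.
by case: (x \in A); case: (x \in B); case: (x \in C).
Qed.

Section Projection.

Variable n : nat.
Implicit Types (E : {set 'I_n}) (I J S P : {set elt n}).

(* E together with its formal copies: the ground set of D([n] \ E). *)
Definition signed E : {set elt n} := [set x | x.1 \in E].

Lemma signedS E1 E2 : E1 \subset E2 -> signed E1 :&: signed E2 = signed E1.
Proof.
move=> sE; apply/setIidPl/subsetP=> x; rewrite !inE; exact: (subsetP sE).
Qed.

Lemma flip_sub_signed E i : i \in E -> [set (i, false); (i, true)] \subset signed E.
Proof. by move=> iE; apply/subsetP=> x; rewrite !inE => /orP [] /eqP ->. Qed.

Lemma admissibleS I J : J \subset I -> admissible I -> admissible J.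
Proof.
move=> sJI /forallP admI; apply/forallP=> i; apply: contra (admI i).
by case/andP=> /(subsetP sJI) -> /(subsetP sJI) ->.
Qed.

Lemma unsignedS I J : J \subset I -> unsigned J \subset unsigned I.
Proof. exact: imsetS. Qed.

Lemma admissible_restrict I J :
  admissible I -> J \subset I -> J = I :&: signed (unsigned J).
Proof.
move=> /forallP admI sJI; apply/setP=> -[i b]; rewrite !inE; apply/idP/andP.
  by move=> xJ; split; [exact: (subsetP sJI) | apply/imsetP; exists (i, b)].
case=> xI /imsetP [[k c] yJ /= ki]; subst k.
have [<-|cb] := eqVneq c b; first by [].
have := admI i; have := subsetP sJI _ yJ.
by case: b c cb xI yJ => -[] //= _ -> _ ->.
Qed.

Variable F : {set {set elt n}}.

Lemma independentS I J : J \subset I -> independent F I -> independent F J.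
Proof.
move=> sJI [admI [B BF sIB]]; split; first exact: admissibleS admI.
by exists B => //; apply: subset_trans sIB.
Qed.

Lemma proj_feasibleS E1 E2 S :
  E1 \subset E2 -> proj_feasible F E2 S -> proj_feasible F E1 (S :&: signed E1).
Proof.
move=> sE /existsP [B /andP [BF /eqP ->]]; apply/existsP; exists B.
by rewrite BF -setIA [_ :&: signed E1]setIC (signedS sE) /=; apply/eqP.
Qed.

Section Restriction.

Variables I J : {set elt n}.
Hypotheses (admI : admissible I) (sJI : J \subset I).

Lemma proj_feasible_restrict P :
  proj_feasible F (unsigned I) (symdiff I P) ->
  proj_feasible F (unsigned J) (symdiff J (P :&: signed (unsigned J))).
Proof.
move=> /(proj_feasibleS (unsignedS sJI)).
by rewrite symdiffIr -(admissible_restrict admI sJI).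
Qed.

Lemma orientable_restrict i :
  i \in unsigned J -> orientable F (unsigned J) J i -> orientable F (unsigned I) I i.
Proof.
move=> iJ; apply: contra => /proj_feasible_restrict.
by rewrite (setIidPl (flip_sub_signed iJ)).
Qed.

Lemma exchange_restrict i j : i \in unsigned J -> j \notin unsigned J -> (j < i)%N ->
  [set (i, false); (j, false); (i, true); (j, true)] :&: signed (unsigned J)
  = [set (i, false); (i, true)].
Proof.
move=> iJ jJ ji; apply/setP=> -[a b]; rewrite !inE /= !xpair_eqE.
have ij : i != j by rewrite -val_eqE /= gtn_eqF.
have [->|_] := eqVneq a i; first by rewrite iJ (negbTE ij) andbT; case: b.
by have [->|//] := eqVneq a j; rewrite (negbTE jJ) andbF.
Qed.

Lemma active_restrict i :
  i \in unsigned J -> active F (unsigned J) J i -> active F (unsigned I) I i.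
Proof.
move=> iJ /andP [oJ noJ]; rewrite /active (orientable_restrict iJ oJ) /=.
apply/existsP=> -[j /andP [/andP [_ ji] /proj_feasible_restrict feas]].
have [jJ | jJ] := boolP (j \in unsigned J).
  move: feas; rewrite (setIidPl _); last first.
    by apply/subsetP=> x; rewrite !inE => /orP [/orP [/orP []|]|] /eqP ->.
  by move=> feas; case/existsP: noJ; exists j; rewrite jJ ji.
by move: feas oJ; rewrite (exchange_restrict iJ jJ ji) /orientable => ->.
Qed.

End Restriction.

End Projection.

Theorem proposition3p9 (n : nat) (F : {set {set elt n}}) :
  delta_matroid F ->
  forall I J : {set elt n},
    independent F I -> num_active F I = 0%N ->
    J \subset I ->
    independent F J /\ num_active F J = 0%N.
Proof.
move=> _ I J indI actI sJI; split; first exact: independentS sJI indI.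
have [admI _] := indI.
apply/eqP; rewrite -leqn0 -actI /num_active; apply: subset_leq_card.
apply/subsetP=> i; rewrite !inE => /andP [iJ act].
by rewrite (subsetP (unsignedS sJI) _ iJ) (active_restrict admI sJI iJ act).
Qed.
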